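(* Let $\boldsymbol\lambda,\boldsymbol\mu\in\Pi^l_m$ and $\lambda,\mu\in\Pi$ with $\boldsymbol\lambda\leftrightarrow\lambda$, $\boldsymbol\mu\leftrightarrow\mu$, and assume $|\lambda|=|\mu|=r$. Then $(\boldsymbol\lambda,\boldsymbol\mu)$ satisfies (J1) or (J2) if and only if $\#(B(\lambda)\cap B(\mu))=r-2$.
   Context: Fix $n,l,m\ge1$ and $\mathbf s_l=(s_1,\dots,s_l)\in\mathbb Z^l$, $s=s_1+\dots+s_l$. Partitions are identified with Young diagrams; $\Pi$ is the set of partitions, $\Pi^l_m$ the set of $l$-tuples $\boldsymbol\lambda=(\lambda^{(1)},\dots,\lambda^{(l)})$ of partitions of total size $m$. A ribbon is a nonempty connected skew diagram containing no $2\times2$ square. For $\lambda$ with $|\lambda|=r$, $B(\lambda)=\{\lambda_i+s+1-i:1\le i\le r\}$. Each $k\in\mathbb Z$ is uniquely $k=c(k)+n(d(k)-1)+nl\,m(k)$ with $c(k)\in\{1,\dots,n\}$, $d(k)\in\{1,\dots,l\}$; $\phi(k)=c(k)+n\,m(k)$. $\boldsymbol\lambda\leftrightarrow\lambda$ iff $\{(\lambda^{(b)}_i+s_b+1-i,b):i\ge1,b\}=\{(\phi(k),d(k)):k\in\{\lambda_i+s+1-i:i\ge1\}\}$. Conditions: (J1) $\boldsymbol\lambda\neq\boldsymbol\mu$ and there are $d\ne d'$ with $\mu^{(d)}\subset\lambda^{(d)}$, $\lambda^{(d')}\subset\mu^{(d')}$, $\lambda^{(b)}=\mu^{(b)}$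 for $b\notin\{d,d'\}$, and $\lambda^{(d)}/\mu^{(d)}$ and $\mu^{(d')}/\lambda^{(d')}$ are ribbons of the same length. (J2) $\boldsymbol\lambda\ne\boldsymbol\mu$ and there is $d$ with $\lambda^{(b)}=\mu^{(b)}$ for $b\ne d$, and $\lambda^{(d)}/(\lambda^{(d)}\cap\mu^{(d)})$, $\mu^{(d)}/(\lambda^{(d)}\cap\mu^{(d)})$ are ribbons of the same length. *)

From mathcomp Require Import all_boot all_order all_algebra.
Set Implicit Arguments. Unset Strict Implicit. Unset Printing Implicit Defensive.
Import Order.TTheory GRing.Theory Num.Theory.
Local Open Scope ring_scope.

(* A partition is a weakly decreasing list of positive naturals;
   lambda_i (i >= 1) is [nth 0 la (i-1)], which is 0 beyond the length. *)
Definition is_partition (la : seq nat) : bool :=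
  sorted geq la && all (fun x => 0 < x)%N la.

(* An l-tuple of partitions (components indexed by 'I_l, b <-> b+1)
   of total size m. *)
Definition is_multipartition (l m : nat) (bla : {ffun 'I_l -> seq nat}) : Prop :=
  (forall b, is_partition (bla b)) /\ (\sum_(b < l) sumn (bla b))%N = m.

Definition psub (mu la : seq nat) : Prop := forall i, (nth 0 mu i <= nth 0 la i)%N.

Definition pmeet (la mu : seq nat) : seq nat :=
  mkseq (fun i => minn (nth 0 la i) (nth 0 mu i)) (minn (size la) (size mu)).

(* cells (i, j), 0-indexed, of the skew diagram la / mu *)
Definition in_skew (la mu : seq nat) (c : nat * nat) : bool :=
  (nth 0 mu c.1 <= c.2 < nth 0 la c.1)%N.

(* number of cells of la / mu (for mu ⊆ la) *)
Definition skew_size (la mu : seq nat) : nat :=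
  (\sum_(i < size la) (nth 0 la i - nth 0 mu i))%N.

Definition cell_adj (c d : nat * nat) : bool :=
  ((maxn c.1 d.1 - minn c.1 d.1) + (maxn c.2 d.2 - minn c.2 d.2) == 1)%N.

Definition skew_connected (la mu : seq nat) : Prop :=
  forall a b, in_skew la mu a -> in_skew la mu b ->
    exists p : seq (nat * nat),
      [/\ path cell_adj a p, all (in_skew la mu) p & last a p = b].

Definition ribbon (la mu : seq nat) : Prop :=
  [/\ exists c, in_skew la mu c,
      skew_connected la mu &
      ~ exists i j, [&& in_skew la mu (i, j), in_skew la mu (i.+1, j),
                        in_skew la mu (i, j.+1) & in_skew la mu (i.+1, j.+1)]].

(* k = c(k) + n(d(k)-1) + n l m(k), c in 1..n, d in 1..l *)
Definition cpart (n l : nat) (k : int) : int := modz (k - 1) n%:Z + 1.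
Definition dpart (n l : nat) (k : int) : int := divz (modz (k - 1) (n * l)%N%:Z) n%:Z + 1.
Definition mpart (n l : nat) (k : int) : int := divz (k - 1) (n * l)%N%:Z.
Definition phi (n l : nat) (k : int) : int := cpart n l k + n%:Z * mpart n l k.

Definition corr (n l : nat) (sl : 'I_l -> int) (bla : {ffun 'I_l -> seq nat})
    (la : seq nat) : Prop :=
  forall (x : int) (b : 'I_l),
    (exists i : nat, x = (nth 0%N (bla b) i)%:Z + sl b + 1 - (i.+1)%:Z) <->
    (exists i : nat,
       let k := (nth 0%N la i)%:Z + (\sum_(b' < l) sl b') + 1 - (i.+1)%:Z in
       phi n l k = x /\ dpart n l k = (nat_of_ord b).+1%:Z).

Definition Bset (s : int) (la : seq nat) : seq int :=
  [seq (nth 0%N la i.-1)%:Z + s + 1 - i%:Z | i <- iota 1 (sumn la)].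

Definition J1 (l : nat) (bla bmu : {ffun 'I_l -> seq nat}) : Prop :=
  bla <> bmu /\
  exists d d' : 'I_l, [/\ d <> d', psub (bmu d) (bla d), psub (bla d') (bmu d'),
    (forall b, b <> d -> b <> d' -> bla b = bmu b) &
    [/\ ribbon (bla d) (bmu d), ribbon (bmu d') (bla d') &
    skew_size (bla d) (bmu d) = skew_size (bmu d') (bla d')]].

Definition J2 (l : nat) (bla bmu : {ffun 'I_l -> seq nat}) : Prop :=
  bla <> bmu /\
  exists d : 'I_l, [/\ (forall b, b <> d -> bla b = bmu b),
    ribbon (bla d) (pmeet (bla d) (bmu d)), ribbon (bmu d) (pmeet (bla d) (bmu d)) &
    skew_size (bla d) (pmeet (bla d) (bmu d)) = skew_size (bmu d) (pmeet (bla d) (bmu d))].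

From mathcomp Require Import all_boot all_order all_algebra.
From mathcomp Require Import zify ring lra.
From Stdlib Require Import Classical.
Set Implicit Arguments. Unset Strict Implicit. Unset Printing Implicit Defensive.
Import Order.TTheory GRing.Theory Num.Theory.
Local Open Scope ring_scope.

(* Encode a partition with charge [t] by its beads, the positions
   [lambda_i + t - i].  Removing a ribbon of length [h] is the same as moving
   one bead [h] places down to an empty position.  The correspondence
   [bla <-> la] distributes the beads of [la] over [l] runners, the beads on
   runner [b] forming the bead set of [bla b]; so, with [r] beads each,
   [#(B la ∩ B mu) = r - δ] where [δ], the number of beads of [la] missing
   from [mu], is the sum of the analogous numbers [δ_b] of the components.
   Now [δ = 2] splits as [1 + 1] or [2 + 0].  In the first case one bead moves
   down on one runner and, since the sizes agree, one moves up by the same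
   distance on another: this is (J1).  In the second case the two components
   exchange two beads; comparing the numbers of beads above each position
   shows that the meet is reached from either one by a single downward move of
   the same length: this is (J2).  Both arguments reverse. *)

(** * Abacus arithmetic *)

Section Abacus.

Variables n l : nat.
Hypotheses (n_gt0 : (0 < n)%N) (l_gt0 : (0 < l)%N).

Lemma modz_mod_mulr (u : int) : modz (modz u (n * l)%N%:Z) n%:Z = modz u n%:Z.
Proof.
rewrite {2}(divz_eq u (n * l)%N%:Z).
have -> : (u %/ (n * l)%N%:Z)%Z * (n * l)%N%:Z = ((u %/ (n * l)%N%:Z)%Z * l%:Z) * n%:Z.
  by rewrite PoszM; ring.
by rewrite modzMDl.
Qed.

(* As [phi k - 1 = (cpart k - 1) + n * mpart k], this is the defining
   decomposition of [k]. *)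
Lemma phi_dpartK (k : int) :
  k = modz (phi n l k - 1) n%:Z + 1 + n%:Z * (dpart n l k - 1)
      + (n * l)%N%:Z * divz (phi n l k - 1) n%:Z.
Proof.
rewrite /phi /cpart /mpart /dpart.
set u := k - 1; set A := divz u (n * l)%N%:Z; set B := modz u (n * l)%N%:Z.
have -> : modz u n%:Z + 1 + n%:Z * A - 1 = A * n%:Z + modz u n%:Z by ring.
have /andP[C0 Cn] : 0 <= modz u n%:Z < n%:Z by rewrite modz_ge0 ?ltz_pmod //; lia.
rewrite modzMDl divzMDl; last by lia.
rewrite (modz_small (m := modz u n%:Z)) ?C0 ?Cn //.
rewrite (divz_small (m := modz u n%:Z)) ?C0 ?Cn // addr0.
have eB := divz_eq B n%:Z; rewrite /B modz_mod_mulr -/B in eB.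
have -> : k = A * (n * l)%N%:Z + B + 1 by rewrite /A /B -divz_eq /u; ring.
rewrite {1}eB; ring.
Qed.

Lemma phi_dpart_inj (k k' : int) :
  phi n l k = phi n l k' -> dpart n l k = dpart n l k' -> k = k'.
Proof. by move=> ephi edpart; rewrite (phi_dpartK k) (phi_dpartK k') ephi edpart. Qed.

Lemma dpart_ord (k : int) : exists b : 'I_l, dpart n l k = (nat_of_ord b).+1%:Z.
Proof.
set B := modz (k - 1) (n * l)%N%:Z.
have /andP[B0 Bnl] : 0 <= B < (n * l)%N%:Z by rewrite modz_ge0 ?ltz_pmod //; lia.
have D0 : 0 <= divz B n%:Z by rewrite divz_ge0 //; lia.
have Dl : divz B n%:Z < l%:Z by rewrite ltz_divLR ?ltz_nat // mulrC -PoszM.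
have ltDl : (`|divz B n%:Z| < l)%N by lia.
by exists (Ordinal ltDl); rewrite /dpart -/B /= -addn1 PoszD gez0_abs.
Qed.

Lemma sum_count_dpart (L : seq int) :
  (\sum_(b < l) count (fun k => dpart n l k == (nat_of_ord b).+1%:Z) L)%N = size L.
Proof.
elim: L => [|k L IH]; first by rewrite big1.
rewrite /= big_split /= IH; have [b0 ->] := dpart_ord k.
rewrite (bigD1 b0) //= eqxx big1 ?addn0 // => b /eqP nb0.
by apply/eqP; rewrite eqb0; apply/eqP => -[e]; apply: nb0; apply: val_inj.
Qed.

End Abacus.

(** * Bead sets *)

Lemma partition_nth_le (p : seq nat) i j :
  is_partition p -> (i <= j)%N -> (nth 0%N p j <= nth 0%N p i)%N.
Proof.
case/andP=> sorted_p _ ij; case: (ltnP j (size p)) => hj; last by rewrite nth_default.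
have geq_trans : transitive geq by move=> a b c /= ba cb; apply: leq_trans cb ba.
apply: (sorted_leq_nth geq_trans leqnn _ sorted_p) => //; rewrite inE //.
exact: leq_ltn_trans hj.
Qed.

Lemma size_partition_le_sumn (p : seq nat) : is_partition p -> (size p <= sumn p)%N.
Proof. by case/andP=> _; elim: p => //= a p IH /andP[a0 /IH]; lia. Qed.

Lemma eq_partition_nth (p q : seq nat) : is_partition p -> is_partition q ->
  (forall i, nth 0%N p i = nth 0%N q i) -> p = q.
Proof.
move=> /andP[_ /allP p_pos] /andP[_ /allP q_pos] e.
have size_pq : size p = size q.
  apply/eqP; rewrite eqn_leq; apply/andP; split; rewrite leqNgt; apply/negP => h.
  - by have := p_pos _ (mem_nth 0%N h); rewrite e nth_default.
  - by have := q_pos _ (mem_nth 0%N h); rewrite -e nth_default.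
by apply: (eq_from_nth (x0 := 0%N) size_pq) => i _; apply: e.
Qed.

Lemma decreasing_range_eq (u v : nat -> int) :
  (forall i j, (i < j)%N -> u j < u i) -> (forall i j, (i < j)%N -> v j < v i) ->
  (forall w, (exists i, w = u i) <-> (exists i, w = v i)) -> u =1 v.
Proof.
move=> u_decr v_decr uv i; elim/ltn_ind: i => i IH.
have [j ej] := (uv (u i)).1 (ex_intro _ i erefl).
have [j' ej'] := (uv (v i)).2 (ex_intro _ i erefl).
have ij : (i <= j)%N.
  by rewrite leqNgt; apply/negP => ji; have := u_decr _ _ ji; rewrite ej -IH ?ltxx.
have ij' : (i <= j')%N.
  by rewrite leqNgt; apply/negP => ji; have := v_decr _ _ ji; rewrite ej' IH ?ltxx.
apply/eqP; rewrite eq_le; apply/andP; split.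
- by rewrite ej; move: ij; rewrite leq_eqVlt => /orP[/eqP->|/v_decr/ltW].
- by rewrite ej'; move: ij'; rewrite leq_eqVlt => /orP[/eqP->|/u_decr/ltW].
Qed.

Definition beta_num (p : seq nat) (t : int) (i : nat) : int :=
  (nth 0%N p i)%:Z + t + 1 - (i.+1)%:Z.
Definition is_beta (p : seq nat) (t : int) (w : int) : Prop := exists i, w = beta_num p t i.
Definition beta_seq (p : seq nat) (t : int) (N : nat) : seq int :=
  map (beta_num p t) (iota 0 N).
Definition beta_diff (p q : seq nat) (t : int) (N : nat) : seq int :=
  [seq w <- beta_seq p t N | w \notin beta_seq q t N].

Section BetaNumbers.

Variable t : int.

Lemma beta_num_decr (p : seq nat) i j :
  is_partition p -> (i < j)%N -> beta_num p t j < beta_num p t i.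
Proof. by move=> pp ij; have := partition_nth_le pp (ltnW ij); rewrite /beta_num; lia. Qed.

Lemma beta_num_inj (p : seq nat) : is_partition p -> injective (beta_num p t).
Proof.
move=> pp i j e; case: (ltngtP i j) => // /(beta_num_decr pp); by rewrite e ltxx.
Qed.

Lemma beta_num_default (p : seq nat) i : (size p <= i)%N -> beta_num p t i = t - i%:Z.
Proof. by move=> h; rewrite /beta_num nth_default //; lia. Qed.

Lemma beta_seq_uniq (p : seq nat) N : is_partition p -> uniq (beta_seq p t N).
Proof. by move=> pp; rewrite map_inj_uniq ?iota_uniq //; apply: beta_num_inj. Qed.

Lemma is_beta_inj (p q : seq nat) : is_partition p -> is_partition q ->
  (forall w, is_beta p t w <-> is_beta q t w) -> p = q.
Proof.
move=> pp qq e; apply: eq_partition_nth => // i.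
have := @decreasing_range_eq (beta_num p t) (beta_num q t)
  (fun i j => beta_num_decr pp) (fun i j => beta_num_decr qq) e i.
by rewrite /beta_num => h; apply/eqP; rewrite -(eqr_nat int); apply/eqP; lia.
Qed.

Section Truncation.

Variable N : nat.

(* Past its parts, [p] has a bead at every position [<= t - N]. *)
Lemma mem_beta_seq (p : seq nat) w : is_partition p -> (size p <= N)%N ->
  (w \in beta_seq p t N) <-> (is_beta p t w /\ t - N%:Z < w).
Proof.
move=> pp sizep; split.
- case/mapP=> i; rewrite mem_iota add0n => /andP[_ iN] ->; split; first by exists i.
  by have := partition_nth_le pp (leq0n i); rewrite /beta_num; lia.
- case=> [[i ->]] lo; apply/mapP; exists i => //; rewrite mem_iota leq0n /=.
  by rewrite ltnNge; apply/negP => Ni; move: lo; rewrite beta_num_default; lia.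
Qed.

Lemma is_beta_low (p : seq nat) w : (size p <= N)%N -> w <= t - N%:Z -> is_beta p t w.
Proof.
move=> sizep hw; exists `|t - w|%N.
by rewrite beta_num_default; [rewrite gez0_abs; lia | lia].
Qed.

Variables (p q : seq nat).
Hypotheses (pp : is_partition p) (qq : is_partition q).
Hypotheses (sizep : (size p <= N)%N) (sizeq : (size q <= N)%N).

Lemma mem_beta_diff w :
  (w \in beta_diff p q t N) <-> (is_beta p t w /\ ~ is_beta q t w).
Proof.
rewrite mem_filter; split.
- case/andP=> /negP nq /(mem_beta_seq w pp sizep) [bp lo]; split=> // bq.
  by apply: nq; apply/(mem_beta_seq w qq sizeq).
- case=> bp nq; have lo : t - N%:Z < w.
    by rewrite ltNge; apply/negP => /(is_beta_low sizeq).
  apply/andP; split; last by apply/(mem_beta_seq w pp sizep).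
  by apply/negP => /(mem_beta_seq w qq sizeq) [].
Qed.

Lemma beta_diff_uniq : uniq (beta_diff p q t N).
Proof. by rewrite filter_uniq // beta_seq_uniq. Qed.

Lemma perm_beta_seq_common :
  perm_eq [seq w <- beta_seq p t N | w \in beta_seq q t N]
          [seq w <- beta_seq q t N | w \in beta_seq p t N].
Proof.
apply: uniq_perm; rewrite ?filter_uniq ?beta_seq_uniq //.
by move=> w; rewrite !mem_filter andbC.
Qed.

Lemma size_beta_diff :
  size (beta_diff p q t N) = (N - size [seq w <- beta_seq p t N | w \in beta_seq q t N])%N.
Proof.
rewrite /beta_diff !size_filter.
have := count_predC (fun w => w \in beta_seq q t N) (beta_seq p t N).
rewrite {2}/beta_seq size_map size_iota => sizeN.
by rewrite -[X in (_ = X - _)%N]sizeN addKn.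
Qed.

End Truncation.

End BetaNumbers.

Lemma sumn_nth_iota (p : seq nat) N :
  (size p <= N)%N -> sumn p = (\sum_(i <- iota 0 N) nth 0%N p i)%N.
Proof.
move=> sizep; rewrite sumnE (big_nth 0%N) -/(index_iota 0 (size p)).
rewrite -(subnKC sizep) iotaD big_cat /= /index_iota subn0.
rewrite [X in (_ + X)%N]big1_seq ?addn0 // => i /andP[_].
by rewrite mem_iota => /andP[sizei _]; rewrite nth_default.
Qed.

Section BetaDiff.

Variables (t : int) (N : nat) (p q : seq nat).
Hypotheses (pp : is_partition p) (qq : is_partition q).
Hypotheses (sizep : (size p <= N)%N) (sizeq : (size q <= N)%N).

Lemma size_beta_diffC : size (beta_diff p q t N) = size (beta_diff q p t N).
Proof. by rewrite !size_beta_diff (perm_size (perm_beta_seq_common t N pp qq)). Qed.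

Lemma sum_beta_seq (r : seq nat) : (size r <= N)%N ->
  \sum_(w <- beta_seq r t N) w = (sumn r)%:Z + \sum_(i <- iota 0 N) (t + 1 - (i.+1)%:Z).
Proof.
move=> sizer; rewrite big_map (sumn_nth_iota sizer).
rewrite (big_morph Posz PoszD (erefl 0%:Z)) -big_split /=.
by apply: eq_bigr => i _; rewrite /beta_num; ring.
Qed.

(* Both truncated bead sets have [N] elements, so their differences carry the
   whole difference of sizes. *)
Lemma sumn_sub_beta_diff :
  (sumn p)%:Z - (sumn q)%:Z = \sum_(w <- beta_diff p q t N) w - \sum_(w <- beta_diff q p t N) w.
Proof.
have split_common r s : \sum_(w <- beta_seq r t N) w =
    \sum_(w <- beta_seq r t N | w \in beta_seq s t N) w + \sum_(w <- beta_diff r s t N) w.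
  by rewrite /beta_diff big_filter [LHS](bigID (fun w => w \in beta_seq s t N)).
have := split_common p q; have := split_common q p.
rewrite (sum_beta_seq sizep) (sum_beta_seq sizeq).
rewrite -[\sum_(w <- beta_seq p t N | _) w]big_filter (perm_big _ (perm_beta_seq_common t N pp qq)).
rewrite big_filter => eq_q eq_p.
by apply/eqP; rewrite -subr_eq0; apply/eqP; move: eq_p eq_q; lra.
Qed.

Lemma beta_diff_nil : beta_diff p q t N = [::] -> p = q.
Proof.
move=> pq0; have /size0nil qp0 : size (beta_diff q p t N) = 0%N.
  by rewrite -size_beta_diffC pq0.
apply: (is_beta_inj pp qq) => w; split=> bw; apply: NNPP => nb.
- by have := (mem_beta_diff t pp qq sizep sizeq w).2 (conj bw nb); rewrite pq0.
- by have := (mem_beta_diff t qq pp sizeq sizep w).2 (conj bw nb); rewrite qp0.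
Qed.

End BetaDiff.

Lemma beta_diff_id (p : seq nat) t N : beta_diff p p t N = [::].
Proof. by rewrite /beta_diff (@eq_in_filter _ _ pred0) ?filter_pred0 // => w ->. Qed.

Definition bead_move (p q : seq nat) (t x y : int) : Prop :=
  [/\ is_beta p t x, ~ is_beta p t y &
      forall z, is_beta q t z <-> (is_beta p t z /\ z <> x) \/ z = y].

Lemma bead_move_sym p q t x y : bead_move p q t x y -> bead_move q p t y x.
Proof.
case=> bx ny mvq; have xy : x <> y by move=> exy; apply: ny; rewrite -exy.
split; first by apply/mvq; right.
  by case/mvq => [[]|].
move=> z; split; last by case=> [[/mvq [[]|] //]|->].
move=> bz; have [->|zx] := eqVneq z x; [by right | left].
split; first by apply/mvq; left; split=> //; apply/eqP.
by move=> zy; apply: ny; rewrite -zy.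
Qed.

Section BeadMoveDiff.

Variables (t : int) (N : nat) (p q : seq nat).
Hypotheses (pp : is_partition p) (qq : is_partition q).
Hypotheses (sizep : (size p <= N)%N) (sizeq : (size q <= N)%N).

Lemma beta_diff1_bead_move :
  size (beta_diff p q t N) = 1%N -> exists x y, bead_move p q t x y.
Proof.
move=> pq1; have qp1 : size (beta_diff q p t N) = 1%N by rewrite -size_beta_diffC.
case: (beta_diff p q t N) (mem_beta_diff t pp qq sizep sizeq) pq1 => [|x [|]] // mem_pq _.
case: (beta_diff q p t N) (mem_beta_diff t qq pp sizeq sizep) qp1 => [|y [|]] // mem_qp _.
have [bx nqx] := (mem_pq x).1 (mem_head _ _).
have [by' npy] := (mem_qp y).1 (mem_head _ _).
exists x, y; split=> // z; split=> [bz|].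
- have [bpz|npz] := classic (is_beta p t z).
    by left; split=> // zx; apply: nqx; rewrite -zx.
  by right; apply/eqP; rewrite -mem_seq1; apply/mem_qp.
- case=> [[bpz zx]|->] //; apply: NNPP => nqz; apply: zx; apply/eqP; rewrite -mem_seq1.
  exact/mem_pq.
Qed.

Lemma bead_move_beta_diff x y : bead_move p q t x y ->
  beta_diff p q t N = [:: x] /\ beta_diff q p t N = [:: y].
Proof.
move=> mv; have [bx ny mvq] := mv; have [by' nx mvp] := bead_move_sym mv.
have seq1_eq s w : uniq s -> (forall z, z \in s <-> z = w) -> s = [:: w].
  move=> us ms; apply: perm_small_eq => //; apply: uniq_perm => // z.
  by rewrite mem_seq1; apply/idP/eqP => /ms.
split; apply: seq1_eq; rewrite ?beta_diff_uniq // => z.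
- rewrite (mem_beta_diff t pp qq sizep sizeq); split=> [[bz nz]|->] //.
  by apply: NNPP => zx; apply: nz; apply/mvq; left.
- rewrite (mem_beta_diff t qq pp sizeq sizep); split=> [[bz nz]|->] //.
  by apply: NNPP => zy; apply: nz; apply/mvp; left.
Qed.

End BeadMoveDiff.

Lemma bead_move_sumn p q t x y : is_partition p -> is_partition q ->
  bead_move p q t x y -> (sumn p)%:Z - (sumn q)%:Z = x - y.
Proof.
move=> pp qq mv; set N := maxn (size p) (size q).
have [sizep sizeq] : (size p <= N)%N /\ (size q <= N)%N by rewrite leq_maxl leq_maxr.
have [pq qp] := bead_move_beta_diff pp qq sizep sizeq mv.
by rewrite (sumn_sub_beta_diff t pp qq sizep sizeq) pq qp !big_seq1.
Qed.

(** * Ribbons as bead moves *)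

(* Remove the term [u a] from the sequence [u] and insert [y] at index [b]. *)
Definition slide (u : nat -> int) (a b : nat) (y : int) (i : nat) : int :=
  if (i < a)%N then u i else if (i < b)%N then u i.+1 else if i == b then y else u i.

Lemma decr_between_fresh (u : nat -> int) b (y : int) :
  (forall i j, (i < j)%N -> u j < u i) -> u b.+1 < y < u b -> ~ exists i, y = u i.
Proof.
move=> u_decr /andP[y_gt y_lt] [i yi].
have u_le k : (k <= b)%N -> u b <= u k by rewrite leq_eqVlt => /orP[/eqP->|/u_decr/ltW].
have u_ge k : (b < k)%N -> u k <= u b.+1 by rewrite leq_eqVlt => /orP[/eqP->|/u_decr/ltW].
by case: (leqP i b) => [/u_le|/u_ge]; lia.
Qed.

Section Slide.

Variables (u : nat -> int) (a b : nat) (y : int).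
Hypothesis u_decr : forall i j, (i < j)%N -> u j < u i.
Hypotheses (ab : (a <= b)%N) (y_gt : u b.+1 < y) (y_lt : y < u b).

Let u_inj : injective u.
Proof. by move=> i j e; case: (ltngtP i j) => // /u_decr; rewrite e ltxx. Qed.

Lemma slide_step k : slide u a b y k.+1 < slide u a b y k.
Proof.
have d0 := u_decr (ltnSn k); have d1 := u_decr (ltnSn k.+1).
rewrite /slide; case: (ltngtP k.+1 a) => [//|ak|ka].
- case: (ltngtP k.+1 b) => [//|bk|kb].
  + by have [->|kb] := eqVneq k b.
  + by rewrite kb.
- move: ab; rewrite -ka leq_eqVlt => /orP[/eqP kb|kb].
  + by rewrite -kb ltnn eqxx; apply: lt_trans d0; rewrite kb.
  + by rewrite kb; apply: lt_trans d1 d0.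
Qed.

Lemma slide_decr i j : (i < j)%N -> slide u a b y j < slide u a b y i.
Proof.
elim: j => // j IH; rewrite ltnS leq_eqVlt => /orP[/eqP->|/IH]; first exact: slide_step.
exact: lt_trans (slide_step j).
Qed.

Lemma slide_range w :
  (exists i, w = slide u a b y i) <-> ((exists i, w = u i) /\ w <> u a) \/ w = y.
Proof.
split.
- case=> i ->; rewrite /slide; case: (ltnP i a) => [ia|ai].
    by left; split; [exists i | move/u_inj; lia].
  case: (ltnP i b) => [ib|bi].
    by left; split; [exists i.+1 | move/u_inj; lia].
  have [_|ib] := eqVneq i b; first by right.
  left; split; first by exists i.
  by move/u_inj; move: ib; lia.
- case=> [[[j ->] ja]|->]; last by exists b; rewrite /slide ltnn eqxx ltnNge ab.
  case: (ltnP j a) => [ja'|aj]; first by exists j; rewrite /slide ja'.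
  have {}aj : (a < j)%N by rewrite ltn_neqAle aj andbT; apply/eqP => e; apply: ja; rewrite e.
  case: (leqP j b) => [jb|bj].
    exists j.-1; rewrite /slide (prednK (leq_ltn_trans (leq0n a) aj)).
    by rewrite leqNgt aj jb.
  by exists j; rewrite /slide ltnNge (ltnW aj) /= ltnNge (ltnW bj) /= gtn_eqF.
Qed.

End Slide.

(* The skew diagram [p / q] is a ribbon occupying the rows [a..b]: there the
   rows of [q] are those of [p] moved up by one row and shortened by one cell. *)
Definition ribbon_rows (p q : seq nat) (a b : nat) : Prop :=
  [/\ (a <= b)%N,
      forall i, (i < a)%N \/ (b < i)%N -> nth 0%N q i = nth 0%N p i,
      forall i, (a <= i)%N -> (i < b)%N -> (nth 0%N q i).+1 = nth 0%N p i.+1 &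
      (nth 0%N q b < nth 0%N p b)%N].

Section RibbonRowsBeads.

Variables (t : int) (p q : seq nat).
Hypotheses (pp : is_partition p) (qq : is_partition q).

Lemma ribbon_rows_slide a b : ribbon_rows p q a b ->
  beta_num q t =1 slide (beta_num p t) a b (beta_num q t b).
Proof.
case=> ab out mid _ i; rewrite /slide /beta_num.
case: ltnP => [ia|ai]; first by rewrite out //; left.
case: ltnP => [ib|bi]; first by have := mid i ai ib; lia.
have [->|ib] := eqVneq i b; first by [].
by rewrite out //; right; rewrite ltn_neqAle eq_sym ib bi.
Qed.

Lemma ribbon_rows_bounds a b : ribbon_rows p q a b ->
  beta_num p t b.+1 < beta_num q t b < beta_num p t b.
Proof.
case=> ab out _ lastrow; have := beta_num_decr t qq (ltnSn b).
rewrite /beta_num (out b.+1); last by right.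
by move=> *; apply/andP; split; lia.
Qed.

Lemma slide_ribbon_rows a b (y : int) : (a <= b)%N -> y < beta_num p t b ->
  beta_num q t =1 slide (beta_num p t) a b y -> ribbon_rows p q a b.
Proof.
move=> ab y_lt eq_q; split=> //.
- move=> i [ia|bi]; have := eq_q i; rewrite /slide /beta_num.
    by rewrite ia; lia.
  have [-> -> ->] : [/\ (i < a)%N = false, (i < b)%N = false & (i == b) = false].
    by split; apply/negbTE; lia.
  by lia.
- by move=> i ai ib; have := eq_q i; rewrite /slide ltnNge ai ib /= /beta_num; lia.
- by have := eq_q b; rewrite /slide ltnn eqxx ltnNge ab /=; move: y_lt; rewrite /beta_num; lia.
Qed.

Lemma ribbon_rows_bead_move a b : ribbon_rows p q a b ->
  bead_move p q t (beta_num p t a) (beta_num q t b) /\ beta_num q t b < beta_num p t a.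
Proof.
move=> rows; have [ab _ _ _] := rows; have decr i j := @beta_num_decr t p i j pp.
have y_bounds := ribbon_rows_bounds rows; have /andP[y_gt y_lt] := y_bounds.
split; last first.
  move: ab; rewrite leq_eqVlt => /orP[/eqP-> //|/decr]; exact: lt_trans.
split; [by exists a | exact: decr_between_fresh decr y_bounds |].
move=> z; rewrite -(slide_range decr ab y_gt y_lt).
have eq_q := ribbon_rows_slide rows.
by split=> -[i ->]; exists i; [exact: eq_q | exact/esym/eq_q].
Qed.

Lemma bead_move_ribbon_rows (x y : int) : bead_move p q t x y -> y < x ->
  exists a b, ribbon_rows p q a b.
Proof.
case=> [[a ->] ny mvq] yx; have decr i j := @beta_num_decr t p i j pp.
set P := fun j => y < beta_num p t j.
have bounded j : P j -> (j <= size p + `|t - y|)%N.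
  rewrite /P; case: (leqP j (size p)) => hj; first by rewrite (leq_trans hj) ?leq_addr.
  by rewrite beta_num_default ?(ltnW hj) //; lia.
have [b y_lt maxb] := ex_maxnP (ex_intro P a yx) bounded.
have ab := maxb a yx.
have y_gt : beta_num p t b.+1 < y.
  rewrite lt_neqAle leNgt; apply/andP; split.
  - by apply/eqP => e; apply: ny; exists b.+1.
  - by apply/negP => /maxb; rewrite ltnn.
exists a, b; apply: (slide_ribbon_rows ab y_lt).
apply: decreasing_range_eq => [i j|i j|w]; first exact: beta_num_decr.
  exact: slide_decr decr ab y_gt y_lt i j.
by rewrite (slide_range decr ab y_gt y_lt); apply: mvq.
Qed.

End RibbonRowsBeads.

Definition skew_conn (la mu : seq nat) (u v : nat * nat) : Prop :=
  exists s : seq (nat * nat), [/\ path cell_adj u s, all (in_skew la mu) s & last u s = v].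

Section SkewConnected.

Variables la mu : seq nat.

Lemma cell_adjC : symmetric cell_adj.
Proof. by move=> u v; rewrite /cell_adj maxnC minnC [maxn u.2 _]maxnC [minn u.2 _]minnC. Qed.

Lemma skew_conn_refl u : skew_conn la mu u u.
Proof. by exists [::]. Qed.

Lemma skew_conn_trans u v w : skew_conn la mu u v -> skew_conn la mu v w -> skew_conn la mu u w.
Proof.
case=> s1 [p1 a1 l1] [s2 [p2 a2 l2]]; exists (s1 ++ s2).
by rewrite cat_path all_cat last_cat l1 p1 p2 a1 a2 l2.
Qed.

Lemma skew_conn_step u v : in_skew la mu v -> cell_adj u v -> skew_conn la mu u v.
Proof. by move=> sv uv; exists [:: v]; rewrite /= uv sv. Qed.

Lemma skew_conn_sym u v : in_skew la mu u -> skew_conn la mu u v -> skew_conn la mu v u.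
Proof.
move=> su [s [p a l]]; elim: s u su p a l => [|x s IH] u su /=.
  by move=> _ _ <-; apply: skew_conn_refl.
case/andP=> ux p /andP[sx a] l; apply: skew_conn_trans (IH x sx p a l) _.
by apply: skew_conn_step; rewrite // cell_adjC.
Qed.

Lemma skew_conn_row i j : (nth 0%N mu i <= j < nth 0%N la i)%N ->
  skew_conn la mu (i, nth 0%N mu i) (i, j).
Proof.
case/andP=> mu_j; rewrite -(subnKC mu_j); elim: (j - _)%N => [|k IH] hk.
  by rewrite addn0; apply: skew_conn_refl.
by apply: skew_conn_trans (IH _) (skew_conn_step _ _); rewrite /in_skew /cell_adj /=; lia.
Qed.

Lemma skew_path_cross u s i : in_skew la mu u -> path cell_adj u s -> all (in_skew la mu) s ->
  (u.1 <= i < (last u s).1)%N -> exists c, in_skew la mu (i, c) && in_skew la mu (i.+1, c).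
Proof.
elim: s u => [|x s IH] u su /=; first by lia.
case/andP=> ux p /andP[sx a] range; case: (leqP x.1 i) => hx.
  by apply: (IH x sx p a); rewrite hx; case/andP: range.
move: ux; rewrite /cell_adj => /eqP ux.
have [e1 e2 e3] : [/\ u.1 = i, x.1 = i.+1 & x.2 = u.2] by split; lia.
exists u.2; apply/andP; split; first by rewrite -e1 -surjective_pairing.
by rewrite -e2 -e3 -surjective_pairing.
Qed.

End SkewConnected.

Section RibbonRows.

Variables p q : seq nat.
Hypotheses (pp : is_partition p) (qq : is_partition q).

Lemma ribbon_rows_support a b i : ribbon_rows p q a b ->
  (nth 0%N q i < nth 0%N p i)%N -> (a <= i <= b)%N.
Proof.
case=> _ out _ _; case: (ltnP i a) => [ia|_ /=]; first by rewrite out ?ltnn //; left.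
by case: (leqP i b) => // bi; rewrite out ?ltnn //; right.
Qed.

Lemma ribbon_rows_connected a b : ribbon_rows p q a b -> skew_connected p q.
Proof.
move=> rows; have [ab _ mid _] := rows.
have row_start i j : in_skew p q (i, j) -> skew_conn p q (i, j) (i, nth 0%N q i).
  move=> sij; apply: skew_conn_sym (skew_conn_row _) => //; rewrite /in_skew /= leqnn.
  by case/andP: sij => /= /leq_ltn_trans; apply.
have down k : (a <= k < b)%N ->
    skew_conn p q (k, nth 0%N q k) (k.+1, nth 0%N q k.+1).
  case/andP=> ak kb; have := mid k ak kb.
  have := partition_nth_le qq (leqnSn k); have := partition_nth_le pp (leqnSn k) => *.
  apply: (@skew_conn_trans _ _ _ (k.+1, nth 0%N q k)).
    by apply: skew_conn_step; rewrite /in_skew /cell_adj /=; lia.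
  by apply: row_start; rewrite /in_skew /=; lia.
have from_a i : (a <= i <= b)%N -> skew_conn p q (a, nth 0%N q a) (i, nth 0%N q i).
  case/andP=> ai; rewrite -(subnKC ai); elim: (i - a)%N => [|k IH] kb.
    by rewrite addn0; apply: skew_conn_refl.
  have kb' : (a + k < b)%N by rewrite -addnS.
  by rewrite addnS; apply: skew_conn_trans (IH (ltnW kb')) (down _ _); rewrite leq_addr kb'.
have sa : in_skew p q (a, nth 0%N q a).
  rewrite /in_skew /= leqnn /=; move: ab; rewrite leq_eqVlt => /orP[/eqP ab|ab].
    by case: rows => _ _ _; rewrite ab.
  by have := mid a (leqnn a) ab; have := partition_nth_le pp (leqnSn a); lia.
move=> [i j] [i' j'] sij sij'.
have row_i (k l : nat) : in_skew p q (k, l) -> (a <= k <= b)%N.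
  by case/andP=> /= ql lp; apply: (ribbon_rows_support rows); apply: leq_ltn_trans ql lp.
change (skew_conn p q (i, j) (i', j')).
apply: skew_conn_trans (row_start _ _ sij) _.
apply: skew_conn_trans (skew_conn_sym sa (from_a _ (row_i _ _ sij))) _.
apply: skew_conn_trans (from_a _ (row_i _ _ sij')) _.
exact: skew_conn_sym sij' (row_start _ _ sij').
Qed.

Lemma ribbon_rows_psub a b : ribbon_rows p q a b -> psub q p.
Proof.
case=> _ out mid lastrow i; case: (ltnP i a) => [ia|ai]; first by rewrite out //; left.
case: (ltngtP i b) => [ib|bi|->]; last exact: ltnW.
  by have := mid i ai ib; have := partition_nth_le pp (leqnSn i); lia.
by rewrite out //; right.
Qed.

Lemma ribbon_rows_ribbon a b : ribbon_rows p q a b -> ribbon p q.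
Proof.
move=> rows; have [_ _ mid lastrow] := rows.
split; first by exists (b, nth 0%N q b); rewrite /in_skew /= leqnn.
  exact: ribbon_rows_connected rows.
case=> i [j /and4P[]]; rewrite /in_skew /= => /andP[s1 s1'] /andP[s2 s2'] _ /andP[_ s4].
have /andP[ai _] := ribbon_rows_support rows (leq_ltn_trans s1 s1').
have /andP[_ ib] := ribbon_rows_support rows (leq_ltn_trans s2 s2').
by have := mid i ai ib; lia.
Qed.

Lemma ribbon_ribbon_rows : psub q p -> ribbon p q -> exists a b, ribbon_rows p q a b.
Proof.
move=> sub [[c /andP[c1 c2]] con no2x2]; set P := fun i => (nth 0%N q i < nth 0%N p i)%N.
have Pc : P c.1 := leq_ltn_trans c1 c2.
have bounded i : P i -> (i <= size p)%N.
  by rewrite /P; case: (leqP i (size p)) => // /ltnW sizep; rewrite (nth_default _ sizep).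
have [a Pa mina] := ex_minnP (ex_intro P _ Pc).
have [b Pb maxb] := ex_maxnP (ex_intro P _ Pc) bounded.
have sa : in_skew p q (a, nth 0%N q a) by rewrite /in_skew /= leqnn.
have sb : in_skew p q (b, nth 0%N q b) by rewrite /in_skew /= leqnn.
have [s [ps al ls]] := con _ _ sa sb.
exists a, b; split=> //; first exact: mina.
  move=> i out; apply/eqP; rewrite eqn_leq sub leqNgt; apply/negP => /[dup] /mina ai /maxb.
  by move: out ai; lia.
move=> i ai ib; have range : (a <= i < (last (a, nth 0%N q a) s).1)%N by rewrite ls ai.
have [d /andP[]] := skew_path_cross sa ps al range; rewrite /in_skew /= => d1 d2.
have := partition_nth_le pp (leqnSn i); have := partition_nth_le qq (leqnSn i) => q_le p_le.
apply/eqP; rewrite eqn_leq; apply/andP; split; first by lia.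
rewrite leqNgt; apply/negP => gap; apply: no2x2; exists i, (nth 0%N q i).
by rewrite /in_skew /=; apply/and4P; split; lia.
Qed.

End RibbonRows.

Lemma size_psub (p q : seq nat) : is_partition q -> psub q p -> (size q <= size p)%N.
Proof.
case/andP=> _ /allP q_pos sub; rewrite leqNgt; apply/negP => /(mem_nth 0%N) /q_pos /= pos.
by have := sub (size p); rewrite (@nth_default _ 0%N p) //; lia.
Qed.

Lemma skew_size_sumn (p q : seq nat) : is_partition q -> psub q p ->
  (skew_size p q + sumn q)%N = sumn p.
Proof.
move=> qq sub; rewrite (sumn_nth_iota (leqnn (size p))) (sumn_nth_iota (size_psub qq sub)).
rewrite /skew_size -(big_mkord xpredT (fun i => nth 0%N p i - nth 0%N q i)%N).
by rewrite /index_iota subn0 -big_split /=; apply: eq_bigr => i _; rewrite subnK.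
Qed.

Section RibbonBeadMove.

Variables (t : int) (p q : seq nat).
Hypotheses (pp : is_partition p) (qq : is_partition q).

Lemma bead_move_ribbon x y : bead_move p q t x y -> y < x ->
  [/\ psub q p, ribbon p q & skew_size p q = (sumn p - sumn q)%N].
Proof.
move=> mv yx; have [a [b rows]] := bead_move_ribbon_rows pp qq mv yx.
have sub := ribbon_rows_psub pp qq rows.
by split; [| exact: ribbon_rows_ribbon rows | rewrite -(skew_size_sumn qq sub) addnK].
Qed.

Lemma ribbon_bead_move : psub q p -> ribbon p q -> exists x y, bead_move p q t x y /\ y < x.
Proof.
move=> sub rib; have [a [b rows]] := ribbon_ribbon_rows pp qq sub rib.
by exists (beta_num p t a), (beta_num q t b); apply: ribbon_rows_bead_move.
Qed.

End RibbonBeadMove.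

(** * Meets *)

Lemma nth_pmeet p q i : nth 0%N (pmeet p q) i = minn (nth 0%N p i) (nth 0%N q i).
Proof.
rewrite /pmeet; case: (ltnP i (minn (size p) (size q))) => h; first by rewrite nth_mkseq.
rewrite nth_default ?size_mkseq //; move: h; rewrite geq_min => /orP[h|h].
  by rewrite (@nth_default _ 0%N p i h) min0n.
by rewrite (@nth_default _ 0%N q i h) minn0.
Qed.

Lemma pmeet_partition p q : is_partition p -> is_partition q -> is_partition (pmeet p q).
Proof.
move=> pp qq; apply/andP; split.
- apply/(sortedP 0%N) => i _; rewrite !nth_pmeet /=.
  by have := partition_nth_le pp (leqnSn i); have := partition_nth_le qq (leqnSn i); lia.
- apply/allP => z /(nthP 0%N) [i]; rewrite size_mkseq leq_min => /andP[ip iq] <-.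
  rewrite nth_pmeet; move: pp qq => /andP[_ /allP p_pos] /andP[_ /allP q_pos].
  by have /= := p_pos _ (mem_nth 0%N ip); have /= := q_pos _ (mem_nth 0%N iq); lia.
Qed.

Lemma pmeet_psubl p q : psub (pmeet p q) p.
Proof. by move=> i; rewrite nth_pmeet geq_minl. Qed.

Lemma pmeet_psubr p q : psub (pmeet p q) q.
Proof. by move=> i; rewrite nth_pmeet geq_minr. Qed.

Lemma pmeetC p q : pmeet p q = pmeet q p.
Proof. by rewrite /pmeet minnC; apply: eq_mkseq => i; rewrite minnC. Qed.

Lemma count_iota_downclosed (P : pred nat) N : (forall i, P i.+1 -> P i) ->
  (count P (iota 0 N) <= N)%N /\ forall i, (i < N)%N -> P i = (i < count P (iota 0 N))%N.
Proof.
move=> P_dc; elim: N => [|N [IH1 IH2]]; first by [].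
rewrite -addn1 iotaD count_cat /= add0n addn0.
have [PN|nPN] := boolP (P N); last first.
  rewrite addn0; split; first by lia.
  move=> i iN; case: (ltnP i N) => [|Ni]; first exact: IH2.
  have -> : i = N by lia.
  by rewrite (negbTE nPN) ltnNge IH1.
have P_le i : (i <= N)%N -> P i.
  move=> iN; rewrite -(subnKC iN) in PN; elim: (N - i)%N PN => [|k IH]; first by rewrite addn0.
  by rewrite addnS => /P_dc.
have -> : count P (iota 0 N) = N.
  apply/eqP; rewrite eqn_leq IH1 leqNgt; apply/negP => cN.
  by have := IH2 _ cN; rewrite ltnn P_le // ltnW.
by split=> [|i iN]; rewrite ?P_le; lia.
Qed.

Lemma count_iota_andb (P Q : pred nat) N :
  (forall i, P i.+1 -> P i) -> (forall i, Q i.+1 -> Q i) ->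
  count (fun i => P i && Q i) (iota 0 N) = minn (count P (iota 0 N)) (count Q (iota 0 N)).
Proof.
move=> P_dc Q_dc.
have PQ_dc i : P i.+1 && Q i.+1 -> P i && Q i by case/andP=> /P_dc -> /Q_dc ->.
have [cP_le cP] := count_iota_downclosed N P_dc.
have [cQ_le cQ] := count_iota_downclosed N Q_dc.
have [cPQ_le cPQ] := count_iota_downclosed N PQ_dc.
set cp := count P _ in cP_le cP *; set cq := count Q _ in cQ_le cQ *.
set cpq := count _ _ in cPQ_le cPQ *.
have lt_cpq i : (i < N)%N -> (i < cpq)%N = (i < minn cp cq)%N.
  by move=> iN; rewrite -cPQ // cP // cQ // leq_min.
apply/eqP; rewrite eqn_leq; apply/andP; split; rewrite leqNgt; apply/negP => lt.
- have iN : (minn cp cq < N)%N by apply: leq_trans lt cPQ_le.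
  by have := lt_cpq _ iN; rewrite lt ltnn.
- have iN : (cpq < N)%N by apply: leq_trans lt (leq_trans (geq_minl _ _) cP_le).
  by have := lt_cpq _ iN; rewrite lt ltnn.
Qed.

Definition beta_count (p : seq nat) (t : int) (N : nat) (z : int) : nat :=
  count (fun w => z <= w) (beta_seq p t N).

Section BetaCount.

Variables (t : int) (N : nat) (p q : seq nat).
Hypotheses (pp : is_partition p) (qq : is_partition q).

Lemma beta_count_step (r : seq nat) z : is_partition r ->
  beta_count r t N z = (beta_count r t N (z + 1) + (z \in beta_seq r t N))%N.
Proof.
move=> rr; rewrite /beta_count -(count_uniq_mem z (beta_seq_uniq t N rr)).
by elim: (beta_seq r t N) => //= w s ->; lia.
Qed.

Lemma beta_count_pmeet z :
  beta_count (pmeet p q) t N z = minn (beta_count p t N z) (beta_count q t N z).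
Proof.
rewrite /beta_count /beta_seq !count_map -count_iota_andb.
- by apply: eq_count => i /=; rewrite /beta_num nth_pmeet; apply/idP/andP; lia.
- by move=> i /= /le_trans; apply; apply/ltW/beta_num_decr.
- by move=> i /= /le_trans; apply; apply/ltW/beta_num_decr.
Qed.

Lemma beta_count_diff z :
  (beta_count p t N z + count (fun w => (z <= w)%R) (beta_diff q p t N) =
   beta_count q t N z + count (fun w => (z <= w)%R) (beta_diff p q t N))%N.
Proof.
have split_count (P Q : pred int) s :
    count P s = (count P [seq x <- s | Q x] + count P [seq x <- s | ~~ Q x])%N.
  by elim: s => //= x s ->; case: (Q x) => /=; lia.
rewrite /beta_count /beta_diff (split_count _ (mem (beta_seq q t N)) (beta_seq p t N)).
rewrite (split_count _ (mem (beta_seq p t N)) (beta_seq q t N)).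
by rewrite (permP (perm_beta_seq_common t N pp qq)) -!addnA; congr (_ + _)%N; apply: addnC.
Qed.

Lemma mem_beta_seq_pmeet w : (w \in beta_seq (pmeet p q) t N) =
  [|| (w \in beta_seq p t N) && (w \in beta_seq q t N),
      (w \in beta_seq p t N) && (beta_count p t N (w + 1) < beta_count q t N (w + 1))%N
    | (w \in beta_seq q t N) && (beta_count q t N (w + 1) < beta_count p t N (w + 1))%N].
Proof.
have := beta_count_pmeet w.
rewrite (beta_count_step w (pmeet_partition pp qq)) (beta_count_pmeet (w + 1)).
rewrite (beta_count_step w pp) (beta_count_step w qq).
by case: (w \in beta_seq (pmeet p q) t N); case: (w \in beta_seq p t N);
  case: (w \in beta_seq q t N) => /=; lia.
Qed.

End BetaCount.

Definition meet_ribbons (p q : seq nat) : Prop :=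
  [/\ ribbon p (pmeet p q), ribbon q (pmeet p q) &
      skew_size p (pmeet p q) = skew_size q (pmeet p q)].

Lemma meet_ribbonsC p q : meet_ribbons p q -> meet_ribbons q p.
Proof. by case; rewrite /meet_ribbons pmeetC. Qed.

Lemma beta_diff1_ribbon (p v : seq nat) t N : is_partition p -> is_partition v -> psub v p ->
  (size p <= N)%N -> (size v <= N)%N -> size (beta_diff p v t N) = 1%N ->
  ribbon p v /\ skew_size p v = (sumn p - sumn v)%N.
Proof.
move=> pp vv sub sizep sizev /(beta_diff1_bead_move pp vv sizep sizev) [x [y mv]].
have yx : y < x.
  have [bx ny _] := mv; have xy : x != y by apply/eqP => exy; apply: ny; rewrite -exy.
  rewrite lt_neqAle eq_sym xy /=; have := bead_move_sumn pp vv mv.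
  by have := skew_size_sumn vv sub; lia.
by case: (bead_move_ribbon pp vv mv yx).
Qed.

Section MeetRibbons.

Variables (t : int) (N : nat) (p q : seq nat).
Hypotheses (pp : is_partition p) (qq : is_partition q).
Hypotheses (sizep : (size p <= N)%N) (sizeq : (size q <= N)%N).

Let v := pmeet p q.
Let vv : is_partition v := pmeet_partition pp qq.
Let sizev : (size v <= N)%N.
Proof. by rewrite /v /pmeet size_mkseq; apply: leq_trans (geq_minl _ _) sizep. Qed.

(* With the differences {a, b} and {c, d} interlaced as b < d < c < a, the
   meet has bead set (p ∩ q) ∪ {b, c}: p loses the bead a and q the bead d. *)
Lemma interlaced_meet_ribbons a b c d :
  perm_eq (beta_diff p q t N) [:: a; b] -> perm_eq (beta_diff q p t N) [:: c; d] ->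
  b < d -> d < c -> c < a -> sumn p = sumn q -> meet_ribbons p q.
Proof.
move=> pq_ab qp_cd bd dc ca sumpq.
have count_ab z : (beta_count p t N z + ((z <= c)%R + (z <= d)%R) =
                   beta_count q t N z + ((z <= a)%R + (z <= b)%R))%N.
  by have := beta_count_diff t N pp qq z; rewrite (permP pq_ab) (permP qp_cd) /= !addn0.
have := perm_mem pq_ab a; have := perm_mem pq_ab b.
have := perm_mem qp_cd c; have := perm_mem qp_cd d.
rewrite !inE !eqxx ?orbT !mem_filter.
move=> /andP[dp dq] /andP[cp cq] /andP[bq bp] /andP[aq ap].
have mem_v := mem_beta_seq_pmeet t N pp qq.
have va : a \notin beta_seq v t N.
  by rewrite mem_v (negbTE aq) ap /=; move: (count_ab (a + 1)); clear -bd dc ca; lia.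
have vb : b \in beta_seq v t N.
  by rewrite mem_v (negbTE bq) bp /=; move: (count_ab (b + 1)); clear -bd dc ca; lia.
have vc : c \in beta_seq v t N.
  by rewrite mem_v (negbTE cp) cq /=; move: (count_ab (c + 1)); clear -bd dc ca; lia.
have vd : d \notin beta_seq v t N.
  by rewrite mem_v (negbTE dp) dq /=; move: (count_ab (d + 1)); clear -bd dc ca; lia.
have pq_v w : w \in beta_seq p t N -> w \in beta_seq q t N -> w \in beta_seq v t N.
  by rewrite mem_v => -> ->.
have size_diff1 r (e : int) : uniq (beta_diff r v t N) -> beta_diff r v t N =i [:: e] ->
    size (beta_diff r v t N) = 1%N.
  by move=> ur erv; rewrite (perm_size (uniq_perm ur _ erv)).
have pv1 : size (beta_diff p v t N) = 1%N.
  apply: (size_diff1 _ a); first exact: beta_diff_uniq.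
  move=> w; rewrite inE mem_filter; apply/andP/eqP => [[nvw pw]|->] //.
  have : w \in beta_diff p q t N by rewrite mem_filter pw andbT; apply: contra nvw; apply: pq_v.
  by rewrite (perm_mem pq_ab) !inE => /orP[/eqP //|/eqP wb]; rewrite wb vb in nvw.
have qv1 : size (beta_diff q v t N) = 1%N.
  apply: (size_diff1 _ d); first exact: beta_diff_uniq.
  move=> w; rewrite inE mem_filter; apply/andP/eqP => [[nvw qw]|->] //.
  have : w \in beta_diff q p t N by rewrite mem_filter qw andbT; apply: contra nvw => /pq_v; apply.
  by rewrite (perm_mem qp_cd) !inE => /orP[/eqP wc|/eqP //]; rewrite wc vc in nvw.
have [rib_p skew_p] := beta_diff1_ribbon pp vv (pmeet_psubl p q) sizep sizev pv1.
have [rib_q skew_q] := beta_diff1_ribbon qq vv (pmeet_psubr p q) sizeq sizev qv1.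
by split=> //; rewrite skew_p skew_q sumpq.
Qed.

End MeetRibbons.

Lemma perm_desc2 (s : seq int) : uniq s -> size s = 2%N -> exists a b, perm_eq s [:: a; b] /\ b < a.
Proof.
case: s => [|x [|y []]] //= /andP[]; rewrite inE => xy _ _.
case: (ltgtP x y) => [lt_xy|lt_yx|exy]; last by rewrite exy eqxx in xy.
- by exists y, x; rewrite (perm_catC [:: x] [:: y]).
- by exists x, y.
Qed.

Section BeadMovesFromMeet.

Variables (t : int) (N : nat) (p q : seq nat).
Hypotheses (pp : is_partition p) (qq : is_partition q).
Hypotheses (sizep : (size p <= N)%N) (sizeq : (size q <= N)%N).

Lemma beta_diff2_meet_ribbons :
  size (beta_diff p q t N) = 2%N -> sumn p = sumn q -> meet_ribbons p q.
Proof.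
move=> pq2 sumpq; have qp2 : size (beta_diff q p t N) = 2%N by rewrite -size_beta_diffC.
have [a [b [pq_ab ba]]] := perm_desc2 (beta_diff_uniq t N q pp) pq2.
have [c [d [qp_cd dc]]] := perm_desc2 (beta_diff_uniq t N p qq) qp2.
have sum_abcd : a + b = c + d.
  have := sumn_sub_beta_diff t pp qq sizep sizeq.
  rewrite sumpq subrr (perm_big _ pq_ab) (perm_big _ qp_cd) !big_cons !big_nil /= !addr0.
  by move/eqP; rewrite eq_sym subr_eq0 => /eqP.
have ac : a != c.
  apply/eqP => eac; have /(mem_beta_diff t pp qq sizep sizeq) [_ nqa] : a \in beta_diff p q t N.
    by rewrite (perm_mem pq_ab) mem_head.
  have /(mem_beta_diff t qq pp sizeq sizep) [qc _] : c \in beta_diff q p t N.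
    by rewrite (perm_mem qp_cd) mem_head.
  by apply: nqa; rewrite eac.
case: (ltgtP c a) => [ca|ac'|eca]; last by rewrite eca eqxx in ac.
- by apply: (interlaced_meet_ribbons pp qq sizep sizeq pq_ab qp_cd) => //; lia.
- apply/meet_ribbonsC/(interlaced_meet_ribbons qq pp sizeq sizep qp_cd pq_ab) => //.
  by lia.
Qed.

Lemma meet_ribbons_beta_diff2 :
  p <> q -> meet_ribbons p q -> size (beta_diff p q t N) = 2%N.
Proof.
move=> npq [rib_p rib_q skew_pq]; have vv := pmeet_partition pp qq.
have [x [y [mvp yx]]] := ribbon_bead_move t pp vv (pmeet_psubl p q) rib_p.
have [x' [y' [mvq yx']]] := ribbon_bead_move t qq vv (pmeet_psubr p q) rib_q.
have shift : x - y = x' - y'.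
  rewrite -(bead_move_sumn pp vv mvp) -(bead_move_sumn qq vv mvq).
  have := skew_size_sumn vv (pmeet_psubl p q); have := skew_size_sumn vv (pmeet_psubr p q).
  by rewrite skew_pq; lia.
have [bvy nvx mvp'] := bead_move_sym mvp; have [bvy' nvx' mvq'] := bead_move_sym mvq.
have xx' : x <> x'.
  move=> exx; apply: npq; apply: (@is_beta_inj t _ _ pp qq) => w.
  have eyy : y = y' by lia.
  by rewrite (mvp' w) (mvq' w) exx eyy.
have mem_pq w : w \in beta_diff p q t N <-> w = x \/ w = y'.
  rewrite (mem_beta_diff t pp qq sizep sizeq); split.
  - case=> /mvp' [[bw wy]|->] nqw; [right | by left].
    by apply: NNPP => wy'; apply: nqw; apply/mvq'; left.
  - case=> ->; split.
    + by apply/mvp'; right.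
    + by case/mvq' => [[]|] //.
    + by apply/mvp'; left; split=> // eyy; apply: xx'; lia.
    + by case/mvq' => [[_ []]|] //; lia.
have xy' : x != y' by apply/eqP => exy; apply: nvx; rewrite exy.
have : perm_eq (beta_diff p q t N) [:: x; y'].
  apply: uniq_perm; rewrite ?beta_diff_uniq //=; first by rewrite inE xy'.
  move=> w; rewrite !inE; apply/idP/idP.
  - by case/mem_pq => ->; rewrite eqxx ?orbT.
  - by case/orP => /eqP ->; apply/mem_pq; [left | right].
by move/perm_size.
Qed.

End BeadMovesFromMeet.

(** * Multipartitions *)

Definition moved_beads (p q : seq nat) (t : int) : nat :=
  size (beta_diff p q t (maxn (size p) (size q))).

Section MovedBeads.

Variables (t : int) (p q : seq nat).
Hypotheses (pp : is_partition p) (qq : is_partition q).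

Let sizep : (size p <= maxn (size p) (size q))%N := leq_maxl _ _.
Let sizeq : (size q <= maxn (size p) (size q))%N := leq_maxr _ _.

Lemma moved_beads_id : moved_beads p p t = 0%N.
Proof. by rewrite /moved_beads beta_diff_id. Qed.

Lemma moved_beadsC : moved_beads p q t = moved_beads q p t.
Proof. by rewrite /moved_beads maxnC size_beta_diffC // maxnC ?leq_maxl ?leq_maxr. Qed.

Lemma moved_beads0 : moved_beads p q t = 0%N -> p = q.
Proof. by move/size0nil; apply: beta_diff_nil. Qed.

Lemma moved_beads1 : moved_beads p q t = 1%N -> exists x y, bead_move p q t x y.
Proof. exact: beta_diff1_bead_move. Qed.

Lemma ribbon_moved_beads : psub q p -> ribbon p q -> moved_beads p q t = 1%N.
Proof.
move=> sub rib; have [x [y [mv _]]] := ribbon_bead_move t pp qq sub rib.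
by rewrite /moved_beads (bead_move_beta_diff pp qq sizep sizeq mv).1.
Qed.

Lemma moved_beads2_meet_ribbons :
  moved_beads p q t = 2%N -> sumn p = sumn q -> meet_ribbons p q.
Proof. exact: beta_diff2_meet_ribbons. Qed.

Lemma meet_ribbons_moved_beads : p <> q -> meet_ribbons p q -> moved_beads p q t = 2%N.
Proof. exact: meet_ribbons_beta_diff2. Qed.

End MovedBeads.

Lemma Bset_beta_seq s la : Bset s la = beta_seq la s (sumn la).
Proof.
rewrite /Bset /beta_seq -[1%N]addn0 iotaDl -map_comp.
by apply: eq_map => j /=; rewrite /beta_num add1n.
Qed.

Section AbacusDecomposition.

Variables (n l : nat) (sl : 'I_l -> int) (bla bmu : {ffun 'I_l -> seq nat}) (la mu : seq nat).
Hypotheses (n_gt0 : (0 < n)%N) (l_gt0 : (0 < l)%N).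
Hypotheses (pla : forall b, is_partition (bla b)) (pmu : forall b, is_partition (bmu b)).
Hypotheses (pl : is_partition la) (pm : is_partition mu).
Hypotheses (cla : corr n sl bla la) (cmu : corr n sl bmu mu).

Let s := \sum_(b < l) sl b.

(* Under the correspondence a bead [k] of [la] sits on runner [dpart k] of the
   abacus, at position [phi k] of the component [bla (dpart k - 1)]. *)
Lemma beta_diff_decomp N : (size la <= N)%N -> (size mu <= N)%N ->
  size (beta_diff la mu s N) = (\sum_(b < l) moved_beads (bla b) (bmu b) (sl b))%N.
Proof.
move=> sizela sizemu; rewrite -(sum_count_dpart n_gt0 l_gt0); apply: eq_bigr => b _.
rewrite /moved_beads -size_filter; set N' := maxn _ _.
have [sizelab sizemub] : (size (bla b) <= N')%N /\ (size (bmu b) <= N')%N.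
  by rewrite leq_maxl leq_maxr.
set F := [seq k <- _ | _].
have uF : uniq (map (phi n l) F).
  rewrite map_inj_in_uniq ?filter_uniq ?beta_seq_uniq // => k k'.
  rewrite !mem_filter => /andP[/eqP dk _] /andP[/eqP dk' _] ek.
  by apply: (phi_dpart_inj n_gt0 l_gt0 ek); rewrite dk dk'.
rewrite -(size_map (phi n l)).
suff eqF : beta_diff (bla b) (bmu b) (sl b) N' =i map (phi n l) F.
  by have := uniq_size_uniq (beta_diff_uniq (sl b) N' (bmu b) (pla b)) eqF; rewrite uF => /esym/eqP.
have memb x := mem_beta_diff (sl b) (pla b) (pmu b) sizelab sizemub x.
have mem x := mem_beta_diff s pl pm sizela sizemu x.
move=> x; apply/idP/idP.
- case/memb => /(cla x b).1 [i [phik dk]] nbx; apply/mapP; exists (beta_num la s i) => //.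
  rewrite mem_filter dk eqxx /=; apply/mem; split; first by exists i.
  case=> i' ei'; apply: nbx; apply/(cmu x b).2; exists i' => /=.
  by rewrite -/(beta_num mu s i') -ei'.
- case/mapP=> k; rewrite mem_filter => /andP[/eqP dk /mem [[i ki] nk]] ->.
  apply/memb; split; first by apply/(cla _ b).2; exists i => /=; rewrite -/(beta_num la s i) -ki.
  case/(cmu _ b).1 => i' [phik' dk']; apply: nk; exists i'.
  by apply/esym/(phi_dpart_inj n_gt0 l_gt0 phik'); rewrite dk dk'.
Qed.

End AbacusDecomposition.

Section SumTwo.

Variables (I : finType) (f : I -> nat).

Lemma sum_nat_gt0_term (P : pred I) :
  (0 < \sum_(b | P b) f b)%N -> exists2 b, P b & (0 < f b)%N.
Proof. by rewrite lt0n sum_nat_eq0 => /forall_inPn [b Pb]; rewrite -lt0n; exists b. Qed.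

Lemma sum_nat_eq0_term (P : pred I) b :
  (\sum_(b | P b) f b)%N = 0%N -> P b -> f b = 0%N.
Proof. by move/eqP; rewrite sum_nat_eq0 => /forall_inP/[apply]/eqP. Qed.

Lemma sum_nat_eq2 : (\sum_b f b)%N = 2%N ->
  (exists d, f d = 2%N /\ forall b, b <> d -> f b = 0%N) \/
  (exists d d', [/\ d <> d', f d = 1%N, f d' = 1%N & forall b, b <> d -> b <> d' -> f b = 0%N]).
Proof.
move=> sum2; have [d _ fd] : exists2 d, true & (0 < f d)%N by apply: sum_nat_gt0_term; rewrite sum2.
rewrite (bigD1 d) //= in sum2.
have [fd2|fd1] : f d = 2%N \/ f d = 1%N by lia.
  move: sum2; rewrite fd2 -{2}[2%N]addn0 => /addnI rest0.
  by left; exists d; split=> // b /eqP bd; apply: sum_nat_eq0_term rest0 bd.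
move: sum2; rewrite fd1 => /addnI rest1.
have [d' d'd fd'] : exists2 d', d' != d & (0 < f d')%N.
  by apply: sum_nat_gt0_term; rewrite rest1.
rewrite (bigD1 d') //= in rest1.
have fd'1 : f d' = 1%N by lia.
move: rest1; rewrite fd'1 -{2}[1%N]addn0 => /addnI rest0.
right; exists d, d'; split=> //; first by move=> e; rewrite e eqxx in d'd.
by move=> b /eqP bd /eqP bd'; apply: sum_nat_eq0_term rest0 _; rewrite bd bd'.
Qed.

End SumTwo.

Section MultiPartitionMoves.

Variables (l : nat) (sl : 'I_l -> int) (bla bmu : {ffun 'I_l -> seq nat}).
Hypotheses (pla : forall b, is_partition (bla b)) (pmu : forall b, is_partition (bmu b)).

Let moved b := moved_beads (bla b) (bmu b) (sl b).

Lemma sumn_eq_on (A : {set 'I_l}) : (forall b, b \notin A -> bla b = bmu b) ->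
  (\sum_b sumn (bla b))%N = (\sum_b sumn (bmu b))%N ->
  (\sum_(b in A) sumn (bla b))%N = (\sum_(b in A) sumn (bmu b))%N.
Proof.
move=> eq_out; rewrite (bigID (mem A)) [in RHS](bigID (mem A)) /=.
rewrite [X in (_ + X)%N = _ -> _](eq_bigr (fun b => sumn (bmu b))) => [|b /eq_out -> //].
by move/eqP; rewrite eqn_add2r => /eqP.
Qed.

Lemma bead_moves_J1 d d' x y x' y' : d <> d' ->
  bead_move (bla d) (bmu d) (sl d) x y -> bead_move (bla d') (bmu d') (sl d') x' y' ->
  y < x -> x - y = y' - x' -> (forall b, b <> d -> b <> d' -> bla b = bmu b) -> J1 bla bmu.
Proof.
move=> dd' mv mv' yx shift eq_out.
have [sub rib skew] := bead_move_ribbon (pla d) (pmu d) mv yx.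
have x'y' : x' < y' by lia.
have [sub' rib' skew'] := bead_move_ribbon (pmu d') (pla d') (bead_move_sym mv') x'y'.
have := bead_move_sumn (pla d) (pmu d) mv; have := bead_move_sumn (pla d') (pmu d') mv'.
move=> sum' sum; split; first by move=> e; move: sum; rewrite e subrr; lia.
by exists d, d'; split=> //; split=> //; rewrite skew skew'; lia.
Qed.

Lemma J1_moved_beads : J1 bla bmu -> (\sum_b moved b)%N = 2%N.
Proof.
case=> _ [d [d' [dd' sub sub' eq_out [rib rib' _]]]].
have fd : moved d = 1%N by apply: ribbon_moved_beads.
have fd' : moved d' = 1%N by rewrite /moved moved_beadsC //; apply: ribbon_moved_beads.
rewrite (bigD1 d) //= (bigD1 d') /=; last by apply/eqP => e; apply: dd'.
rewrite big1 ?fd ?fd' // => b /andP[/eqP bd /eqP bd'].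
by rewrite /moved eq_out // moved_beads_id.
Qed.

Lemma J2_moved_beads : J2 bla bmu -> (\sum_b moved b)%N = 2%N.
Proof.
case=> neq [d [eq_out rib rib' skew]].
have nd : bla d <> bmu d.
  move=> e; apply: neq; apply/ffunP => b.
  by have [->|/eqP bd] := eqVneq b d; [exact: e | exact: eq_out].
rewrite (bigD1 d) //= big1 ?addn0; first exact: meet_ribbons_moved_beads.
by move=> b /eqP bd; rewrite /moved eq_out // moved_beads_id.
Qed.

Lemma moved_beads_J1_J2 : (\sum_b sumn (bla b))%N = (\sum_b sumn (bmu b))%N ->
  (\sum_b moved b)%N = 2%N -> J1 bla bmu \/ J2 bla bmu.
Proof.
move=> sum_eq /sum_nat_eq2 [[d [fd rest]]|[d [d' [dd' fd fd' rest]]]].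
- have eq_out b : b <> d -> bla b = bmu b by move/rest/moved_beads0; apply.
  have sumd : sumn (bla d) = sumn (bmu d).
    have := sumn_eq_on (A := [set d]); rewrite !big_set1; apply=> // b.
    by rewrite inE => /eqP; apply: eq_out.
  right; split; first by move=> e; move: fd; rewrite /moved e moved_beads_id.
  have [rib rib' skew] := moved_beads2_meet_ribbons (pla d) (pmu d) fd sumd.
  by exists d; split.
have eq_out b : b <> d -> b <> d' -> bla b = bmu b.
  by move=> bd bd'; apply: (moved_beads0 (t := sl b) (pla b) (pmu b)); apply: rest.
have [x [y mv]] := moved_beads1 (pla d) (pmu d) fd.
have [x' [y' mv']] := moved_beads1 (pla d') (pmu d') fd'.
have sumdd' : (sumn (bla d) + sumn (bla d') = sumn (bmu d) + sumn (bmu d'))%N.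
  have dd'N : d \notin [set d'] by rewrite inE; apply/eqP.
  have := sumn_eq_on (A := [set d; d']); rewrite !big_setU1 // !big_set1; apply=> // b.
  by rewrite !inE negb_or => /andP[/eqP bd /eqP bd']; apply: eq_out.
have := bead_move_sumn (pla d) (pmu d) mv; have := bead_move_sumn (pla d') (pmu d') mv'.
move=> sum' sum; left; have [_ ny _] := mv.
case: (ltgtP x y) => [xy|yx|exy]; last by case: ny; rewrite -exy; case: mv.
- apply: (bead_moves_J1 (d := d') (d' := d) _ mv' mv); try lia.
  + by move=> e; apply: dd'.
  + by move=> b bd' bd; apply: eq_out.
- by apply: (bead_moves_J1 dd' mv mv'); try lia.
Qed.

End MultiPartitionMoves.

Lemma J1_or_J2_moved_beads l (sl : 'I_l -> int) (bla bmu : {ffun 'I_l -> seq nat}) :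
  (forall b, is_partition (bla b)) -> (forall b, is_partition (bmu b)) ->
  (\sum_b sumn (bla b))%N = (\sum_b sumn (bmu b))%N ->
  (J1 bla bmu \/ J2 bla bmu) <-> (\sum_b moved_beads (bla b) (bmu b) (sl b))%N = 2%N.
Proof.
move=> pla pmu sum_eq; split; last exact: moved_beads_J1_J2.
by case; [apply: J1_moved_beads | apply: J2_moved_beads].
Qed.

Unset Implicit Arguments.

Theorem mainTheorem7 (n l m : nat) (sl : 'I_l -> int)
    (bla bmu : {ffun 'I_l -> seq nat}) (la mu : seq nat) (r : nat) :
  (0 < n)%N -> (0 < l)%N -> (0 < m)%N ->
  is_multipartition m bla -> is_multipartition m bmu ->
  is_partition la -> is_partition mu ->
  corr n sl bla la -> corr n sl bmu mu ->
  sumn la = r -> sumn mu = r ->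
  (J1 bla bmu \/ J2 bla bmu) <->
  (size (undup [seq x <- Bset (\sum_(b < l) sl b) la
                 | x \in Bset (\sum_(b < l) sl b) mu]))%:Z = r%:Z - 2.
Proof.
move=> n_gt0 l_gt0 _ [pla sla] [pmu smu] pl pm cla cmu sumla summu.
have sizela : (size la <= r)%N by rewrite -sumla size_partition_le_sumn.
have sizemu : (size mu <= r)%N by rewrite -summu size_partition_le_sumn.
rewrite (J1_or_J2_moved_beads sl pla pmu); last by rewrite sla smu.
rewrite -(beta_diff_decomp n_gt0 l_gt0 pla pmu pl pm cla cmu sizela sizemu).
rewrite !Bset_beta_seq sumla summu undup_id ?filter_uniq ?beta_seq_uniq // size_beta_diff.
set s := \sum_(b < l) sl b.
have : (size [seq w <- beta_seq la s r | w \in beta_seq mu s r] <= r)%N.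
  by rewrite size_filter (leq_trans (count_size _ _)) // size_map size_iota.
by split; lia.
Qed.
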